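(* Let $\mathcal{V}_t$ be a variety of $\Omega$-algebras satisfying $t(x,y)=x$ for some $t\in T_2$, and let $\mathcal{W}$ be any variety of $\Omega$-algebras. Then the relative Mal'tsev product $\mathcal{V}_t\circ_{\mathcal{W}}\mathcal{S}$ is a variety.
   Context: $\Omega$-algebras are of a plural similarity type (no nullary operation symbols, at least one operation symbol of arity $\ge2$). $T_2$ is the set of binary $\Omega$-terms in $x_1,x_2$ in which both variables occur. An identity is regular if the same variables occur on both sides; $\mathcal{S}$ is the variety of $\Omega$-algebras satisfying all regular identities. The relative Mal'tsev product $\mathcal{V}\circ_{\mathcal{W}}\mathcal{S}$ is the class of all $A\in\mathcal{W}$ having a congruence $\theta$ with $A/\theta\in\mathcal{S}$ and every $\theta$-class (a subalgebra) in $\mathcal{V}$; equivalently $\mathcal{W}\cap(\mathcal{V}\circ\mathcal{S})$. *)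

From mathcomp Require Import all_boot.
From Stdlib Require Import ClassicalEpsilon.

Set Implicit Arguments.
Unset Strict Implicit.
Unset Printing Implicit Defensive.

Section UniversalAlgebra.

Variables (Op : Type) (ar : Op -> nat).

Record algebra := Algebra {
  carrier :> Type;
  op : forall o : Op, ('I_(ar o) -> carrier) -> carrier }.

(* Omega-terms in the variables x_0, x_1, x_2, ... (Var n is x_(n+1)). *)
Inductive term : Type :=
  | Var : nat -> term
  | App : forall o : Op, ('I_(ar o) -> term) -> term.

Fixpoint eval (A : algebra) (v : nat -> A) (t : term) : A :=
  match t with
  | Var n => v n
  | App o args => @op A o (fun i => @eval A v (args i))
  end.

Fixpoint occurs (n : nat) (t : term) : Prop :=
  match t with
  | Var m => n = m
  | App o args => exists i, occurs n (args i)
  end.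

Definition satisfies (A : algebra) (s t : term) : Prop :=
  forall v : nat -> A, eval v s = eval v t.

Definition algclass := algebra -> Prop.

Definition Mod (Sigma : term -> term -> Prop) : algclass :=
  fun A => forall s t, Sigma s t -> satisfies A s t.

Definition is_variety (K : algclass) : Prop :=
  exists Sigma : term -> term -> Prop, forall A, K A <-> Mod Sigma A.

Definition regular (s t : term) : Prop := forall n, occurs n s <-> occurs n t.

Definition Svar : algclass := Mod regular.

(* T_2: binary terms in x_1 = Var 0, x_2 = Var 1 in which both occur *)
Definition in_T2 (t : term) : Prop :=
  (forall n, occurs n t -> n = 0 \/ n = 1) /\ occurs 0 t /\ occurs 1 t.

Definition congruence (A : algebra) (th : A -> A -> Prop) : Prop :=
  [/\ (forall x, th x x),
      (forall x y, th x y -> th y x),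
      (forall x y z, th x y -> th y z -> th x z) &
      (forall o (a b : 'I_(ar o) -> A),
          (forall i, th (a i) (b i)) -> th (@op A o a) (@op A o b))].

Definition qcarrier (A : algebra) (th : A -> A -> Prop) :=
  {X : A -> Prop | exists a, X = th a}.

Definition qrep (A : algebra) (th : A -> A -> Prop) (X : qcarrier th) : A :=
  proj1_sig (constructive_indefinite_description _ (proj2_sig X)).

Definition qop (A : algebra) (th : A -> A -> Prop) (o : Op)
    (args : 'I_(ar o) -> qcarrier th) : qcarrier th :=
  exist _ (th (@op A o (fun i => qrep (args i))))
          (ex_intro _ (@op A o (fun i => qrep (args i))) erefl).

Definition quotient (A : algebra) (th : A -> A -> Prop) : algebra :=
  @Algebra (qcarrier th) (@qop A th).

Definition closed (A : algebra) (B : A -> Prop) : Prop :=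
  forall o (a : 'I_(ar o) -> A), (forall i, B (a i)) -> B (@op A o a).

Definition subalg (A : algebra) (B : A -> Prop) (H : closed B) : algebra :=
  @Algebra {x : A | B x}
    (fun o args => exist _ (@op A o (fun i => proj1_sig (args i)))
                           (H o _ (fun i => proj2_sig (args i)))).

Definition malcev_rel (V W : algclass) : algclass :=
  fun A => W A /\
    exists th : A -> A -> Prop,
      [/\ congruence th, Svar (quotient th) &
          forall a : A, exists H : closed (th a), V (subalg H)].

End UniversalAlgebra.

Arguments Var {Op ar}.

From Pilot Require Import Defs.
From mathcomp Require Import all_boot.
From Stdlib Require Import ClassicalEpsilon FunctionalExtensionality.
From Stdlib Require Import PropExtensionality ProofIrrelevance.

(* Let K = V_t o_W S; we show that every model A of the identities of K lies
   in K.  Put x θ y iff t(x,y) = x and t(y,x) = y.  Two families of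
   identities hold in K: t(r1,r2) = r1 for every regular r1 = r2 (in the
   blocks of a K-algebra, which lie in V_t, the values of r1 and r2 are
   congruent), and, for every identity s = u of V_t, the identity obtained
   by substituting t(x_n, t(s,u)) for each x_n (this moves all arguments into
   the block of t(s,u)).  In A, the first family makes θ a congruence with
   A/θ in S, and the second makes every θ-class a model of V_t.  Finally A is
   in W because K is contained in W. *)

Set Implicit Arguments.
Unset Strict Implicit.

Lemma proj1_sig_inj (T : Type) (P : T -> Prop) (x y : {z : T | P z}) :
  proj1_sig x = proj1_sig y -> x = y.
Proof. by case: x => x px; case: y => y py /= exy; apply: subset_eq_compat. Qed.

Section Terms.
Variables (Op : Type) (ar : Op -> nat).

Fixpoint subst (sg : nat -> term ar) (r : term ar) : term ar :=
  match r with
  | Var n => sg n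
  | App o args => @App _ ar o (fun i => subst sg (args i))
  end.

Lemma eval_subst (A : algebra ar) (v : nat -> A) sg r :
  eval v (subst sg r) = eval (fun n => eval v (sg n)) r.
Proof.
elim: r => [n|o args IH] //=.
by congr op; apply: functional_extensionality => i; apply: IH.
Qed.

Lemma occurs_subst m sg (r : term ar) :
  occurs m (subst sg r) <-> exists k, occurs k r /\ occurs m (sg k).
Proof.
elim: r => [n|o args IH] /=.
  by split=> [occ_m|[k [-> occ_m]]]; first exists n.
split=> [[i /IH [k [occ_k occ_m]]]|[k [[i occ_k] occ_m]]].
  by exists k; split; first exists i.
by exists i; apply/IH; exists k.
Qed.

Lemma eq_eval_occurs (A : algebra ar) (v w : nat -> A) (r : term ar) :
  (forall n, occurs n r -> v n = w n) -> eval v r = eval w r.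
Proof.
elim: r => [n|o args IH] /= vw; first exact: vw.
by congr op; apply: functional_extensionality => i; apply: IH => n occ_n;
  apply: vw; exists i.
Qed.

Definition theory (K : algclass ar) (s u : term ar) : Prop :=
  forall B, K B -> satisfies B s u.

Lemma is_variety_theory (K : algclass ar) :
  (forall A, Mod (theory K) A -> K A) -> is_variety K.
Proof. by move=> ModK; exists (theory K) => A; split=> [KA s u /(_ A KA)|/ModK]. Qed.

Lemma Mod_theory_sub (K W : algclass ar) (A : algebra ar) :
  (forall B, K B -> W B) -> is_variety W -> Mod (theory K) A -> W A.
Proof.
move=> KW [SigW defW] ModA; apply/defW => s u Sig_su v.
by apply: ModA => B /KW /defW; apply.
Qed.

End Terms.

Section Quotient.
Variables (Op : Type) (ar : Op -> nat) (A : algebra ar) (th : A -> A -> Prop).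
Hypothesis th_cong : congruence th.

Lemma congruence_eval (v w : nat -> A) r :
  (forall n, th (v n) (w n)) -> th (eval v r) (eval w r).
Proof.
move=> vw; elim: r => [n|o args IH] //=.
by case: th_cong => _ _ _; apply.
Qed.

Lemma class_eqP x y : th x = th y <-> th x y.
Proof.
case: th_cong => th_refl th_sym th_trans _; split=> [->|xy]; first exact: th_refl.
apply: functional_extensionality => z; apply: propositional_extensionality.
by split; [apply: th_trans; apply: th_sym | apply: th_trans].
Qed.

Definition qclass (a : A) : quotient th :=
  exist _ (th a) (ex_intro _ a erefl).

Lemma qrepP (X : qcarrier th) : proj1_sig X = th (qrep X).
Proof. by rewrite /qrep; case: (constructive_indefinite_description _ _). Qed.

Lemma qclass_eq (X Y : qcarrier th) : proj1_sig X = proj1_sig Y -> X = Y.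
Proof. exact: proj1_sig_inj. Qed.

Lemma qclass_qrep (X : qcarrier th) : qclass (qrep X) = X.
Proof. by apply: qclass_eq; rewrite [RHS]qrepP. Qed.

Lemma eval_qclass (v : nat -> A) r :
  proj1_sig (eval (fun n => qclass (v n)) r) = th (eval v r).
Proof.
elim: r => [n|o args IH] //=; apply/class_eqP.
case: th_cong => _ th_sym _; apply => i.
by apply/th_sym/class_eqP; rewrite -qrepP IH.
Qed.

Lemma Svar_quotientP :
  Svar (quotient th) <->
  forall r1 r2, regular r1 r2 -> forall v, th (eval v r1) (eval v r2).
Proof.
split=> [Sth r1 r2 reg v | reg_th r1 r2 reg V].
  by apply/class_eqP; rewrite -!eval_qclass (Sth _ _ reg).
have -> : V = fun n => qclass (qrep (V n)).
  by apply: functional_extensionality => n; rewrite qclass_qrep.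
by apply: qclass_eq; rewrite !eval_qclass; apply/class_eqP/reg_th.
Qed.

End Quotient.

Section Subalgebra.
Variables (Op : Type) (ar : Op -> nat) (A : algebra ar) (B : A -> Prop).

Lemma closed_eval (v : nat -> A) r :
  Defs.closed B -> (forall n, B (v n)) -> B (eval v r).
Proof. by move=> clB Bv; elim: r => [n|o args IH] //=; apply: clB. Qed.

Hypothesis clB : Defs.closed B.

Lemma eval_subalg (w : nat -> subalg clB) r :
  proj1_sig (eval w r) = eval (fun n => proj1_sig (w n)) r.
Proof.
elim: r => [n|o args IH] //=.
by congr op; apply: functional_extensionality => i; apply: IH.
Qed.

Lemma Mod_subalgP (Sig : term ar -> term ar -> Prop) :
  Mod Sig (subalg clB) <->
  forall s u, Sig s u -> forall v, (forall n, B (v n)) -> eval v s = eval v u.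
Proof.
split=> [ModB s u Sig_su v Bv | ModB s u Sig_su w].
  pose w n : subalg clB := exist _ (v n) (Bv n).
  by have := ModB s u Sig_su w; move/(f_equal (@proj1_sig _ _)); rewrite !eval_subalg.
apply: proj1_sig_inj; rewrite !eval_subalg.
by apply: ModB => // n; case: (w n).
Qed.

End Subalgebra.

Section TwoVariableTerm.
Variables (Op : Type) (ar : Op -> nat) (t : term ar).
Hypothesis t_T2 : in_T2 t.

Definition tbin (A : algebra ar) (x y : A) : A :=
  eval (fun n => if n == 0 then x else y) t.

Definition tbin_term (r1 r2 : term ar) : term ar :=
  subst (fun n => if n == 0 then r1 else r2) t.

Lemma eval_tbin_term (A : algebra ar) (v : nat -> A) r1 r2 :
  eval v (tbin_term r1 r2) = tbin (eval v r1) (eval v r2).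
Proof.
rewrite eval_subst; congr eval; apply: functional_extensionality => n.
by case: (n == 0).
Qed.

Lemma occurs_tbin_term m r1 r2 :
  occurs m (tbin_term r1 r2) <-> occurs m r1 \/ occurs m r2.
Proof.
rewrite occurs_subst; case: t_T2 => t_vars [occ0 occ1].
split=> [[k [/t_vars [] -> occ_m]]|[occ_m|occ_m]]; [by left | by right | |].
- by exists 0.
- by exists 1.
Qed.

Variables (Vt : algclass ar) (SigV : term ar -> term ar -> Prop).
Hypothesis defVt : forall A, Vt A <-> Mod SigV A.
Hypothesis Vt_t : forall A, Vt A -> satisfies A t (Var 0).

Section Blocks.
Variables (B : algebra ar) (phi : B -> B -> Prop).
Hypothesis phi_cong : congruence phi.
Hypothesis blocks_Vt : forall a, exists H : Defs.closed (phi a), Vt (subalg H).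

Lemma tbin_block (x y : B) : phi y x -> tbin x y = x.
Proof.
move=> yx; have [H Vt_block] := blocks_Vt y.
have y_y : phi y y by case: phi_cong.
pose w n : subalg H := if n == 0 then exist _ x yx else exist _ y y_y.
have := Vt_t Vt_block w; move/(f_equal (@proj1_sig _ _)); rewrite !eval_subalg.
apply: eq_trans; rewrite /tbin; congr eval; apply: functional_extensionality => n.
by rewrite /w; case: (n == 0).
Qed.

Lemma block_identity s u (q : B) (v : nat -> B) :
  SigV s u -> (forall n, occurs n s \/ occurs n u -> phi q (v n)) ->
  eval v s = eval v u.
Proof.
move=> Sig_su qv; have [H /defVt /Mod_subalgP Vt_block] := blocks_Vt q.
pose w n := if excluded_middle_informative (occurs n s \/ occurs n u)
            then v n else q.
have vw r : (forall n, occurs n r -> occurs n s \/ occurs n u) ->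
    eval v r = eval w r.
  move=> r_su; apply: eq_eval_occurs => n /r_su occ_n.
  by rewrite /w; case: excluded_middle_informative.
rewrite (vw s (fun n occ_n => or_introl occ_n)).
rewrite (vw u (fun n occ_n => or_intror occ_n)).
apply: Vt_block => // n; rewrite /w {vw}.
case: excluded_middle_informative => [occ_n|_] /=; first exact: qv.
by case: phi_cong.
Qed.

End Blocks.

Variable W : algclass ar.
Let K := malcev_rel Vt W.

Lemma theory_tbin_regular r1 r2 :
  regular r1 r2 -> theory K (tbin_term r1 r2) r1.
Proof.
move=> reg B [_ [phi [phi_cong /Svar_quotientP S_phi blocks]]] v.
rewrite eval_tbin_term; apply: (tbin_block phi_cong blocks).
by case: phi_cong (S_phi phi_cong r1 r2 reg v) => _ phi_sym _ _ /phi_sym.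
Qed.

Definition block_subst (s u : term ar) (n : nat) : term ar :=
  tbin_term (Var n) (tbin_term s u).

Lemma theory_block_subst s u :
  SigV s u -> theory K (subst (block_subst s u) s) (subst (block_subst s u) u).
Proof.
move=> Sig_su B [_ [phi [phi_cong /Svar_quotientP S_phi blocks]]] v.
rewrite !eval_subst; apply: (block_identity phi_cong blocks Sig_su) => n occ_n.
have reg : regular (tbin_term s u) (block_subst s u n).
  move=> m; rewrite !occurs_tbin_term /=.
  by split=> [|[->|]]; [right | | ].
exact: S_phi phi_cong _ _ reg v.
Qed.

Section ModelsOfTheory.
Variable A : algebra ar.
Hypothesis ModA : Mod (theory K) A.

Definition tkernel (x y : A) : Prop := tbin x y = x /\ tbin y x = y.

Lemma tkernel_regular r1 r2 :
  regular r1 r2 -> forall v, tkernel (eval v r1) (eval v r2).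
Proof.
move=> reg v; have reg' : regular r2 r1 by move=> n; split; apply reg.
have := ModA (theory_tbin_regular reg) v; have := ModA (theory_tbin_regular reg') v.
by rewrite !eval_tbin_term.
Qed.

Lemma tkernel_refl x : tkernel x x.
Proof. exact: (@tkernel_regular (Var 0) (Var 0) (fun n => conj id id) (fun=> x)). Qed.

Lemma tkernel_sym x y : tkernel x y -> tkernel y x.
Proof. by case. Qed.

(* t(x0, t(x1, x2)) = t(x2, t(x1, x0)) is regular; at x θ y θ z its two
   sides reduce to t(x, z) and t(z, x). *)
Lemma tkernel_trans x y z : tkernel x y -> tkernel y z -> tkernel x z.
Proof.
move=> [xy yx] [yz zy].
pose v n := if n == 0 then x else if n == 1 then y else z.
have reg : regular (tbin_term (Var 0) (tbin_term (Var 1) (Var 2)))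
                   (tbin_term (Var 2) (tbin_term (Var 1) (Var 0))).
  by move=> m; rewrite !occurs_tbin_term /=; tauto.
by have := tkernel_regular reg v; rewrite !eval_tbin_term /= yz xy yx zy.
Qed.

(* Argument i of o is coded by x_i and x_(ar o + i), so that the regular
   identity o(t(x_i, x_(ar o + i)))_i = o(t(x_(ar o + i), x_i))_i applies. *)
Lemma tkernel_compat o (a b : 'I_(ar o) -> A) :
  (forall i, tkernel (a i) (b i)) -> tkernel (op a) (op b).
Proof.
move=> ab.
pose v n := if insub n is Some i then a i
            else if insub (n - ar o) is Some j then b j else op a.
have va (i : 'I_(ar o)) : v i = a i by rewrite /v valK.
have vb (i : 'I_(ar o)) : v (ar o + i) = b i.
  by rewrite /v insubF ?addKn ?valK // ltnNge leq_addr.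
have reg : regular (@App _ ar o (fun i => tbin_term (Var i) (Var (ar o + i))))
                   (@App _ ar o (fun i => tbin_term (Var (ar o + i)) (Var i))).
  by move=> m /=; split=> -[i]; exists i; move: p; rewrite !occurs_tbin_term /=; tauto.
have ev_a : (fun i : 'I_(ar o) => eval v (tbin_term (Var i) (Var (ar o + i)))) = a.
  by apply: functional_extensionality => i; rewrite eval_tbin_term /= va vb; case: (ab i).
have ev_b : (fun i : 'I_(ar o) => eval v (tbin_term (Var (ar o + i)) (Var i))) = b.
  by apply: functional_extensionality => i; rewrite eval_tbin_term /= va vb; case: (ab i).
by have := tkernel_regular reg v; rewrite /= ev_a ev_b.
Qed.

Lemma tkernel_congruence : congruence tkernel.
Proof.
split; [exact: tkernel_refl | exact: tkernel_sym | exact: tkernel_trans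
       | exact: tkernel_compat].
Qed.

Hypothesis ar_gt0 : forall o, 0 < ar o.

(* The regular identity x0 = o(x0, ..., x0) needs o to have an argument. *)
Lemma tkernel_closed (a : A) : Defs.closed (tkernel a).
Proof.
move=> o args a_args.
have reg : regular (Var 0) (@App _ ar o (fun=> Var 0)).
  by move=> m /=; split=> [->|[]//]; exists (Ordinal (ar_gt0 o)).
apply: tkernel_trans (tkernel_regular reg (fun=> a)) _.
exact: tkernel_compat.
Qed.

Lemma tkernel_block_Vt a : Vt (subalg (@tkernel_closed a)).
Proof.
apply/defVt/Mod_subalgP => s u Sig_su v a_v.
have := ModA (theory_block_subst Sig_su) v; rewrite !eval_subst.
suff -> : (fun n => eval v (block_subst s u n)) = v by [].
apply: functional_extensionality => n; rewrite eval_tbin_term /=.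
have a_su := closed_eval (tbin_term s u) (@tkernel_closed a) a_v.
by case: (tkernel_trans (tkernel_sym (a_v n)) a_su).
Qed.

Lemma malcev_of_theory : is_variety W -> K A.
Proof.
move=> varW; split; first by apply: Mod_theory_sub varW ModA => B [].
exists tkernel; split; first exact: tkernel_congruence.
  by apply/Svar_quotientP; [exact: tkernel_congruence | exact: tkernel_regular].
by move=> a; exists (@tkernel_closed a); apply: tkernel_block_Vt.
Qed.

End ModelsOfTheory.

End TwoVariableTerm.

Theorem corollary5p5 (Op : Type) (ar : Op -> nat)
  (Hnonullary : forall o : Op, 0 < ar o)
  (Hplural : exists o : Op, 2 <= ar o)
  (Vt W : algclass ar) :
  is_variety Vt ->
  (exists t : term ar, in_T2 t /\ forall A, Vt A -> satisfies A t (Var 0)) ->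
  is_variety W ->
  is_variety (malcev_rel Vt W).
Proof.
move=> [SigV defVt] [t [t_T2 Vt_t]] varW.
apply: is_variety_theory => A ModA.
exact: (malcev_of_theory t_T2 defVt Vt_t ModA Hnonullary varW).
Qed.
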